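(* Let $\mathcal{P}(3^3)$ be the graph whose vertices are the 280 partitions of $\{1,\ldots,9\}$ into three cells each of size three, two such partitions being adjacent if and only if each cell of one partition contains exactly one point from each cell of the other, and let $A$ be its adjacency matrix. Let $M$ be the $280\times 36$ $0/1$-matrix with rows indexed by these partitions and columns indexed by the 2-element subsets of $\{1,\ldots,9\}$, whose entry in row $\pi$ and column $\{i,j\}$ is $1$ if and only if $\{i,j\}$ is contained in a cell of $\pi$. Let $J$ be the $280\times 36$ all-ones matrix. Then every column of $M-\frac14 J$ is an eigenvector of $A$ with eigenvalue $-12$, and the columns of $M-\frac14 J$ span a space of dimension $27$. *)

(* The ground set {1,...,9} is modelled by 'I_9 = {0,...,8}. *)
From HB Require Import structures.
From mathcomp Require Import all_boot all_order all_algebra.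
Set Implicit Arguments. Unset Strict Implicit. Unset Printing Implicit Defensive.
Import Order.TTheory GRing.Theory Num.Theory.
Local Open Scope ring_scope.

Definition is_part33 (P : {set {set 'I_9}}) : bool :=
  partition P [set: 'I_9] && [forall B in P, #|B| == 3%N].

Definition part33 := {P : {set {set 'I_9}} | is_part33 P}.

Definition adj33 (P Q : part33) : bool :=
  [forall B in val P, forall C in val Q, #|B :&: C| == 1%N].

Definition pair9 := {S : {set 'I_9} | #|S| == 2%N}.

Definition adjmx : 'M[rat]_(#|{: part33}|) :=
  \matrix_(i, j) (adj33 (@enum_val _ {: part33} i) (@enum_val _ {: part33} j))%:R.

Definition incmx : 'M[rat]_(#|{: part33}|, #|{: pair9}|) :=
  \matrix_(i, j) ([exists B in val (@enum_val _ {: part33} i), val (@enum_val _ {: pair9} j) \subset B])%:R.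

Definition onesmx : 'M[rat]_(#|{: part33}|, #|{: pair9}|) := const_mx 1.

From HB Require Import structures.
From mathcomp Require Import all_boot all_order all_algebra.
From mathcomp Require Import zify lra.
Import Order.TTheory GRing.Theory Num.Theory.
Set Implicit Arguments. Unset Strict Implicit. Unset Printing Implicit Defensive.

(* A partition of the nine points into three triples is coded by a labeling of
   the points with labels 0, 1, 2, each used three times; relabeling the cells in
   order of first occurrence leaves 280 codes, one per partition, on which the
   following counts are checked by computation.  A partition has 36 neighbours;
   none of them (resp. 12 of them) contain in a cell a given pair lying in (resp.
   split by) a cell of the partition.  Two pairs meeting in 2, 1 or 0 points lie
   in cells of 70, 10 or 20 common partitions.  A point lies in 8 pairs, 2 of them
   inside its cell.
   The neighbour counts give A N = -12 N entrywise.  For the rank, let V be the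
   36 x 9 pair-point incidence matrix, which has rank 9.  The point counts give
   N V = 0, hence rank N <= 36 - 9; the pair counts give M^T N + V D = 70 I with
   D = 10 (V^T - J/8), hence rank N >= 36 - rank V. *)

Lemma card_sig_count (T : finType) (P : pred T) (r : seq T) (p : pred T) :
  uniq r -> (forall t, P t = (t \in r)) ->
  #|[set t : {t | P t} | p (val t)]| = count p r.
Proof.
move=> r_uniq Pr; rewrite -size_filter.
move/card_uniqP: (filter_uniq p r_uniq) => <-.
rewrite -(card_imset _ val_inj); apply: eq_card => x.
rewrite mem_filter -Pr andbC; apply/imsetP/andP => [[t + ->]|[Px px]].
  by rewrite inE => pt; split; [exact: valP|].
by exists (Sub x Px); rewrite ?inE SubK.
Qed.

Lemma card_ord_count n (p : pred nat) : #|[set x : 'I_n | p x]| = count p (iota 0 n).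
Proof.
by rewrite cardsE cardE -val_enum_ord count_map -size_filter /enum_mem filter_predT.
Qed.

Lemma iota_ord n (x : 'I_n) : val x \in iota 0 n.
Proof. by rewrite mem_iota ltn_ord. Qed.

Lemma eq_inord n (x : 'I_n.+1) a : a < n.+1 -> (x == inord a) = (val x == a).
Proof. by move=> a_lt; rewrite -val_eqE /= inordK. Qed.

Section RingFacts.
Local Open Scope ring_scope.

Lemma sumr_bool (R : pzSemiRingType) (T : finType) (p : pred T) :
  \sum_(t : T) (p t)%:R = #|[set t | p t]|%:R :> R.
Proof.
rewrite -sum1_card natr_sum [RHS]big_mkcond; apply: eq_bigr => t _.
by rewrite inE; case: (p t).
Qed.

Lemma sumr_boolMB (R : pzRingType) (T : finType) (a b : pred T) (c : R) :
  \sum_(t : T) (a t)%:R * ((b t)%:R - c)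
  = #|[set t | a t && b t]|%:R - #|[set t | a t]|%:R * c.
Proof.
rewrite -!sumr_bool mulr_suml -sumrB; apply: eq_bigr => t _.
by case: (a t); case: (b t); rewrite /= ?mul1r ?mul0r ?subr0 ?sub0r ?oppr0.
Qed.

Lemma mulmx_enum_rank (R : pzSemiRingType) (U : finType) m p
    (A : 'M[R]_(m, #|U|)) (B : 'M[R]_(#|U|, p)) i j :
  (A *m B) i j = \sum_(u : U) A i (enum_rank u) * B (enum_rank u) j.
Proof. by rewrite mxE (reindex enum_rank) //; apply: onW_bij; exact: enum_rank_bij. Qed.

Lemma mxrank_complementary (F : fieldType) m n p (N : 'M[F]_(m, n)) (V : 'M_(n, p))
    (X : 'M_(n, m)) (D : 'M_(p, n)) :
  N *m V = 0 -> X *m N + V *m D \in unitmx -> (\rank N + \rank V)%N = n.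
Proof.
move=> NV0 unitXD; apply/eqP; rewrite eqn_leq; apply/andP; split.
  by have := mxrank_mul_min N V; rewrite NV0 mxrank0 leqn0 subn_eq0.
rewrite -{1}(mxrank_unit unitXD); apply: leq_trans (mxrank_add _ _) _.
by apply: leq_add; [exact: mxrankM_maxr | exact: mxrankM_maxl].
Qed.

End RingFacts.

Definition label (s : seq nat) (x : nat) : nat := nth 0 s x.

Fixpoint words (k n : nat) : seq (seq nat) :=
  if n is n'.+1 then [seq i :: w | i <- iota 0 k, w <- words k n'] else [:: [::]].

Lemma words_complete k s : all (gtn k) s -> s \in words k (size s).
Proof.
elim: s => [|i s IHs] //= /andP[ik /IHs ws].
by apply: allpairs_f ws; rewrite mem_iota.
Qed.

Definition normalize (s : seq nat) : seq nat := [seq index v (undup s) | v <- s].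

Lemma label_normalize s x y : x < size s -> y < size s ->
  (label (normalize s) x == label (normalize s) y) = (label s x == label s y).
Proof.
move=> xs ys; rewrite /label !(nth_map 0) //.
have mem_u z : z < size s -> nth 0 s z \in undup s.
  by move=> zs; rewrite mem_undup mem_nth.
apply/eqP/eqP => [E|-> //].
by rewrite -(nth_index 0 (mem_u x xs)) E nth_index ?mem_u.
Qed.

Definition balanced (s : seq nat) : bool :=
  [&& size s == 9, all (gtn 3) s & all (fun i => count_mem i s == 3) (iota 0 3)].

Lemma balanced_size s : balanced s -> size s = 9.
Proof. by case/and3P => /eqP. Qed.

Lemma balanced_label s (x : 'I_9) : balanced s -> label s x < 3.
Proof. by case/and3P => /eqP s9 /allP lt3 _; apply: lt3; rewrite mem_nth // s9. Qed.

Definition same_pattern (s t : seq nat) : bool :=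
  all (fun x => all (fun y =>
    (label s x == label s y) == (label t x == label t y)) (iota 0 9)) (iota 0 9).

Lemma same_patternP s t :
  reflect (forall x y : 'I_9, (label s x == label s y) = (label t x == label t y))
          (same_pattern s t).
Proof.
apply: (iffP allP) => [st x y|st x]; last first.
  rewrite mem_iota => /andP[_ x9]; apply/allP => y; rewrite mem_iota => /andP[_ y9].
  exact/eqP/(st (Ordinal x9) (Ordinal y9)).
by move/(_ x (iota_ord x))/allP/(_ y (iota_ord y))/eqP: st.
Qed.

Definition cell (s : seq nat) (i : nat) : {set 'I_9} := [set x : 'I_9 | label s x == i].
Definition partition_of (s : seq nat) : {set {set 'I_9}} := [set cell s i | i : 'I_3].

Lemma card_cell s i : size s = 9 -> #|cell s i| = count_mem i s.
Proof.
move=> s9; rewrite (card_ord_count _ (fun x => label s x == i)).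
by rewrite -[in RHS](mkseq_nth 0 s) s9 count_map.
Qed.

Lemma card_cell_balanced s (i : 'I_3) : balanced s -> #|cell s i| = 3.
Proof.
move=> bs; rewrite card_cell ?balanced_size //.
by case/and3P: bs => _ _ /allP/(_ i (iota_ord i))/eqP.
Qed.

Lemma cell_mem_partition_of s (i : 'I_3) : cell s i \in partition_of s.
Proof. exact: imset_f. Qed.

Lemma is_part33_partition_of s : balanced s -> is_part33 (partition_of s).
Proof.
move=> bs; apply/andP; split; last first.
  by apply/forall_inP => _ /imsetP[i _ ->]; rewrite card_cell_balanced.
have cell_neq0 : set0 \notin partition_of s.
  apply/imsetP => -[i _] /(congr1 (fun B : {set 'I_9} => #|B|)).
  by rewrite card_cell_balanced // cards0.
apply/and3P; split => //.
  apply/eqP/setP => x; rewrite inE; apply/bigcupP.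
  by exists (cell s (Ordinal (balanced_label x bs))); rewrite ?cell_mem_partition_of ?inE.
apply/trivIsetP => _ _ /imsetP[i _ ->] /imsetP[j _ ->] ij.
rewrite -setI_eq0; apply/eqP/setP => x; rewrite !inE.
by apply/negP => /andP[/eqP xi /eqP xj]; rewrite -xi -xj eqxx in ij.
Qed.

Lemma partition_of_same_label s t (x y : 'I_9) :
  balanced s -> partition_of s = partition_of t ->
  label s x == label s y -> label t x == label t y.
Proof.
move=> bs st sxy.
have := cell_mem_partition_of s (Ordinal (balanced_label x bs)).
rewrite st => /imsetP[j _ Ej].
have : x \in cell t j by rewrite -Ej inE.
have : y \in cell t j by rewrite -Ej inE eq_sym.
by rewrite !inE => /eqP -> /eqP ->.
Qed.

Lemma cell_in_partition_of s t (i : 'I_3) : balanced s -> balanced t ->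
  (forall x y : 'I_9, (label s x == label s y) = (label t x == label t y)) ->
  cell s i \in partition_of t.
Proof.
move=> bs bt st.
have /card_gt0P[x] : 0 < #|cell s i| by rewrite card_cell_balanced.
rewrite inE => /eqP sxi.
suff -> : cell s i = cell t (Ordinal (balanced_label x bt)).
  exact: cell_mem_partition_of.
by apply/setP => y; rewrite !inE -sxi /= st.
Qed.

Lemma partition_of_eq s t : balanced s -> balanced t ->
  (partition_of s == partition_of t) = same_pattern s t.
Proof.
move=> bs bt; apply/eqP/same_patternP => [st x y|st].
  by apply/idP/idP; apply: partition_of_same_label.
apply/eqP; rewrite eqEsubset; apply/andP; split; apply/subsetP => _ /imsetP[i _ ->].
  exact: cell_in_partition_of.
by apply: cell_in_partition_of => // x y; rewrite st.
Qed.

Lemma exists_balanced_labeling X :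
  is_part33 X -> exists2 s, balanced s & partition_of s = X.
Proof.
case/andP => partX /forall_inP cellX; have /and3P[/eqP coverX trivX _] := partX.
have cardX : #|X| = 3.
  have := card_partition partX; rewrite cardsT card_ord.
  by rewrite (eq_bigr (fun _ => 3)) ?sum_nat_const => [|B /cellX /eqP]; lia.
pose e := enum X; have size_e : size e = 3 by rewrite -cardE.
have pblockX (x : 'I_9) : pblock X x \in X by rewrite pblock_mem // coverX inE.
pose f x := index (pblock X x) e.
have f_lt3 x : f x < 3 by rewrite -[m in _ < m]size_e index_mem mem_enum.
pose s := mkseq (fun k => f (inord k)) 9.
have label_s (x : 'I_9) : label s x = f x by rewrite /label nth_mkseq // inord_val.
have cell_s i : i < 3 -> cell s i = nth set0 e i.
  move=> i3; have eiX : nth set0 e i \in X by rewrite -mem_enum mem_nth ?size_e.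
  apply/setP => x; rewrite inE label_s; apply/eqP/idP => [<-|xe].
    by rewrite nth_index ?mem_enum // mem_pblock coverX inE.
  by rewrite /f (def_pblock trivX eiX xe) index_uniq ?enum_uniq ?size_e.
exists s.
  apply/and3P; split; first by rewrite size_mkseq.
    by apply/allP => _ /mapP[k _ ->]; apply: f_lt3.
  apply/allP => i; rewrite mem_iota => /andP[_ i3].
  by rewrite -card_cell ?size_mkseq // cell_s // cellX // -mem_enum mem_nth ?size_e.
apply/setP => B; apply/imsetP/idP => [[i _ ->]|BX].
  by rewrite cell_s // -mem_enum mem_nth ?size_e.
have iB : index B e < 3 by rewrite -[m in _ < m]size_e index_mem mem_enum.
by exists (Ordinal iB); rewrite // cell_s // nth_index ?mem_enum.
Qed.

Definition labelings : seq (seq nat) :=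
  undup [seq normalize s | s <- words 3 9 & balanced s].

Lemma uniq_labelings : uniq labelings.
Proof. exact: undup_uniq. Qed.

Lemma normalize_in_labelings s : balanced s -> normalize s \in labelings.
Proof.
move=> bs; rewrite mem_undup map_f // mem_filter bs -(balanced_size bs).
by rewrite words_complete //; case/and3P: bs.
Qed.

(* [labelings] is only meant to be evaluated by [vm_compute]; this keeps
   [done] and unification from trying to unfold it. *)
Opaque labelings.

Lemma labelings_balanced : all balanced labelings.
Proof. by vm_compute. Qed.

Lemma labelings_distinct_patterns :
  all (fun s => all (fun t => same_pattern s t ==> (s == t)) labelings) labelings.
Proof. by vm_compute. Qed.

Lemma labeling_balanced s : s \in labelings -> balanced s.
Proof. exact: (allP labelings_balanced). Qed.

Lemma uniq_map_partition_of : uniq (map partition_of labelings).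
Proof.
rewrite map_inj_in_uniq; first exact: uniq_labelings.
move=> s t Ls Lt /eqP.
rewrite (partition_of_eq (labeling_balanced Ls) (labeling_balanced Lt)).
by move/allP/(_ s Ls)/allP/(_ t Lt)/implyP: labelings_distinct_patterns => st /st /eqP.
Qed.

Lemma mem_map_partition_of X : (X \in map partition_of labelings) = is_part33 X.
Proof.
apply/mapP/idP => [[s /labeling_balanced bs ->]|/exists_balanced_labeling[s bs <-]].
  exact: is_part33_partition_of.
exists (normalize s); first exact: normalize_in_labelings.
apply/eqP; rewrite (partition_of_eq bs (labeling_balanced (normalize_in_labelings bs))).
apply/same_patternP => x y.
by rewrite label_normalize ?(balanced_size bs) ?ltn_ord.
Qed.

Lemma card_part33 (p : pred {set {set 'I_9}}) :
  #|[set P : part33 | p (val P)]| = count (p \o partition_of) labelings.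
Proof.
rewrite -count_map; apply: card_sig_count; first exact: uniq_map_partition_of.
by move=> X; rewrite mem_map_partition_of.
Qed.

Lemma part33_labeling (P : part33) :
  exists2 s, s \in labelings & val P = partition_of s.
Proof. by apply/mapP; rewrite mem_map_partition_of (valP P). Qed.

Definition pairs9 : seq (nat * nat) := [seq (a, b) | b <- iota 0 9, a <- iota 0 b].

Definition pair_set (ab : nat * nat) : {set 'I_9} := [set inord ab.1; inord ab.2].

Lemma mem_pairs9 a b : ((a, b) \in pairs9) = (a < b < 9).
Proof.
apply/allpairsPdep/andP => [[y [x [+ + [-> ->]]]]|[ab b9]].
  by rewrite !mem_iota !add0n => /andP[_ y9] /andP[_ xy].
by exists b, a; rewrite !mem_iota !add0n ab b9.
Qed.

Lemma mem_pair_set ab (x : 'I_9) : ab \in pairs9 ->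
  (x \in pair_set ab) = (val x \in [:: ab.1; ab.2]).
Proof.
case: ab => a b; rewrite mem_pairs9 => /andP[ab b9].
by rewrite !inE !eq_inord // (ltn_trans ab).
Qed.

Lemma pair_set_inj : {in pairs9 &, injective pair_set}.
Proof.
move=> [a b] [c d] /[dup] ab_in; rewrite mem_pairs9 => /andP[ab b9].
move=> /[dup] cd_in; rewrite mem_pairs9 => /andP[cd d9] abcd.
have mem x : x < 9 -> (x \in [:: a; b]) = (x \in [:: c; d]).
  move=> x9; move: (mem_pair_set (Ordinal x9) ab_in) (mem_pair_set (Ordinal x9) cd_in).
  by rewrite abcd => <- <-.
have := mem a (ltn_trans ab b9); have := mem b b9.
have := mem c (ltn_trans cd d9); have := mem d d9.
rewrite !inE !eqxx ?orbT /= => *.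
by apply/eqP; rewrite xpair_eqE; lia.
Qed.

Lemma uniq_map_pair_set : uniq (map pair_set pairs9).
Proof. by rewrite map_inj_in_uniq; [| exact: pair_set_inj]. Qed.

Lemma mem_map_pair_set X : (X \in map pair_set pairs9) = (#|X| == 2).
Proof.
apply/mapP/cards2P => [[[a b]]|[x [y [xy ->]]]].
  rewrite mem_pairs9 => /andP[ab b9] ->; exists (inord a), (inord b); split=> //.
  by rewrite eq_inord //= inordK ?(ltn_trans ab) // neq_ltn ab.
without loss lt_xy : x y xy / x < y.
  move=> wlog; case: (ltngtP x y) => [||/val_inj/eqP]; first exact: wlog.
    by rewrite setUC; apply: wlog; rewrite eq_sym.
  by rewrite (negbTE xy).
by exists (val x, val y); rewrite ?mem_pairs9 ?lt_xy ?ltn_ord // /pair_set !inord_val.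
Qed.

Lemma card_pair9 (p : pred {set 'I_9}) :
  #|[set S : pair9 | p (val S)]| = count (p \o pair_set) pairs9.
Proof.
rewrite -count_map; apply: card_sig_count; first exact: uniq_map_pair_set.
by move=> X; rewrite mem_map_pair_set.
Qed.

Lemma pair9_pair (S : pair9) : exists2 ab, ab \in pairs9 & val S = pair_set ab.
Proof. by apply/mapP; rewrite mem_map_pair_set (valP S). Qed.

Lemma card_pair9T : #|{: pair9}| = 36.
Proof.
transitivity #|[set S : pair9 | predT (val S)]|; first by apply: eq_card => S; rewrite inE.
by rewrite card_pair9.
Qed.

Lemma pair9_meet_le2 (S T : pair9) : #|val S :&: val T| <= 2.
Proof.
apply: leq_trans (subset_leq_card (subsetIl (val S) (val T))) _.
by rewrite (eqP (valP S)).
Qed.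

Lemma pair9_eqE (S T : pair9) : (S == T) = (#|val S :&: val T| == 2).
Proof.
apply/eqP/eqP => [->|ST2]; first by rewrite setIid (eqP (valP T)).
have card_le (X Y : pair9) : #|val X| <= #|val X :&: val Y| -> val X \subset val Y.
  by move=> le; apply/setIidPl/eqP; rewrite eqEcard subsetIl le.
apply/val_inj/eqP; rewrite eqEsubset card_le ?ST2 ?(eqP (valP S)) //.
by rewrite card_le // setIC ST2 (eqP (valP T)).
Qed.

Definition incident (X : {set {set 'I_9}}) (S : {set 'I_9}) : bool :=
  [exists B in X, S \subset B].

Definition transverse (X Y : {set {set 'I_9}}) : bool :=
  [forall B in X, forall C in Y, #|B :&: C| == 1].

Definition same_label (s : seq nat) (ab : nat * nat) : bool := label s ab.1 == label s ab.2.

Definition orthogonal (s t : seq nat) : bool :=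
  all (fun i => all (fun j =>
    count (fun x => (label s x == i) && (label t x == j)) (iota 0 9) == 1)
    (iota 0 3)) (iota 0 3).

Lemma incident_partition_of s ab : balanced s -> ab \in pairs9 ->
  incident (partition_of s) (pair_set ab) = same_label s ab.
Proof.
case: ab => a b bs; rewrite mem_pairs9 => /andP[ab b9]; have a9 := ltn_trans ab b9.
apply/existsP/eqP => [[_ /andP[/imsetP[i _ ->] /subsetP sub]]|sab].
  have := sub _ (set21 (inord a) (inord b)); have := sub _ (set22 (inord a) (inord b)).
  by rewrite !inE !inordK // => /eqP -> /eqP ->.
exists (cell s (Ordinal (balanced_label (inord a) bs))).
rewrite cell_mem_partition_of /=.
by apply/subsetP => x; rewrite !inE => /orP[] /eqP ->; rewrite !inordK // sab.
Qed.

Lemma transverse_partition_of s t :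
  transverse (partition_of s) (partition_of t) = orthogonal s t.
Proof.
have meet_card (i j : 'I_3) : #|cell s i :&: cell t j|
    = count (fun x => (label s x == i) && (label t x == j)) (iota 0 9).
  by rewrite -card_ord_count; apply: eq_card => x; rewrite !inE.
apply/forall_inP/allP => [st i|st _ /imsetP[i _ ->]].
  rewrite mem_iota => /andP[_ i3]; apply/allP => j; rewrite mem_iota => /andP[_ j3].
  rewrite -[i]/(val (Ordinal i3)) -[j]/(val (Ordinal j3)) -meet_card.
  exact: (forall_inP (st _ (cell_mem_partition_of _ _)) _ (cell_mem_partition_of _ _)).
apply/forall_inP => _ /imsetP[j _ ->].
by rewrite meet_card; apply: (allP (st _ (iota_ord i))) (iota_ord j).
Qed.

Lemma neighbour_counts :
  all (fun s => let nbrs := filter (orthogonal s) labelings in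
    (size nbrs == 36) && all (fun ab =>
      count (same_label^~ ab) nbrs == if same_label s ab then 0 else 12) pairs9)
  labelings.
Proof. by vm_compute. Qed.

Lemma common_cell_counts :
  all (fun ab => all (fun cd =>
    count (fun s => same_label s ab && same_label s cd) labelings ==
    nth 0 [:: 20; 10; 70]
      (count (fun x => (x \in [:: ab.1; ab.2]) && (x \in [:: cd.1; cd.2])) (iota 0 9)))
    pairs9) pairs9.
Proof. by vm_compute. Qed.

Lemma pair_degree :
  all (fun x => count (fun ab => x \in [:: ab.1; ab.2]) pairs9 == 8) (iota 0 9).
Proof. by []. Qed.

Lemma cell_pair_degree :
  all (fun s => all (fun x =>
    count (fun ab => (x \in [:: ab.1; ab.2]) && same_label s ab) pairs9 == 2) (iota 0 9))
  labelings.
Proof. by vm_compute. Qed.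

Lemma card_adj33 (P : part33) : #|[set Q | adj33 P Q]| = 36.
Proof.
have [s Ls Ps] := part33_labeling P.
rewrite /adj33 Ps (card_part33 (transverse (partition_of s))).
have /andP[/eqP nbrs _] := allP neighbour_counts s Ls.
apply: etrans nbrs; rewrite size_filter; apply: eq_in_count => t Lt.
exact: transverse_partition_of.
Qed.

Lemma card_adj33_incident (P : part33) (S : pair9) :
  #|[set Q | adj33 P Q && incident (val Q) (val S)]|
  = if incident (val P) (val S) then 0 else 12.
Proof.
have [s Ls Ps] := part33_labeling P; have [ab Pab Sab] := pair9_pair S.
have bs := labeling_balanced Ls.
rewrite /adj33 Ps Sab (incident_partition_of bs Pab).
rewrite (card_part33 (fun X => transverse (partition_of s) X && incident X (pair_set ab))).
have /andP[_ /allP/(_ ab Pab)/eqP nbrs_ab] := allP neighbour_counts s Ls.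
apply: etrans nbrs_ab; rewrite count_filter; apply: eq_in_count => t Lt.
by rewrite /= transverse_partition_of (incident_partition_of (labeling_balanced Lt) Pab) andbC.
Qed.

Lemma card_incident2 (S T : pair9) :
  #|[set P : part33 | incident (val P) (val S) && incident (val P) (val T)]|
  = nth 0 [:: 20; 10; 70] #|val S :&: val T|.
Proof.
have [ab Pab ->] := pair9_pair S; have [cd Pcd ->] := pair9_pair T.
rewrite (card_part33 (fun X => incident X (pair_set ab) && incident X (pair_set cd))).
have -> : #|pair_set ab :&: pair_set cd|
    = count (fun x => (x \in [:: ab.1; ab.2]) && (x \in [:: cd.1; cd.2])) (iota 0 9).
  rewrite -card_ord_count; apply: eq_card => x.
  by rewrite in_setI (mem_pair_set _ Pab) (mem_pair_set _ Pcd) !inE.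
apply: etrans (eqP (allP (allP common_cell_counts _ Pab) _ Pcd)).
apply: eq_in_count => s Ls; have bs := labeling_balanced Ls.
by rewrite /= (incident_partition_of bs Pab) (incident_partition_of bs Pcd).
Qed.

Lemma card_incident (S : pair9) : #|[set P : part33 | incident (val P) (val S)]| = 70.
Proof.
transitivity #|[set P : part33 | incident (val P) (val S) && incident (val P) (val S)]|.
  by apply: eq_card => P; rewrite !inE andbb.
by rewrite card_incident2 setIid (eqP (valP S)).
Qed.

Lemma card_pair9_mem (x : 'I_9) : #|[set S : pair9 | x \in val S]| = 8.
Proof.
rewrite (card_pair9 (fun X => x \in X)).
apply: etrans (eqP (allP pair_degree _ (iota_ord x))).
by apply: eq_in_count => ab Pab; rewrite /= mem_pair_set.
Qed.

Lemma card_incident_mem (P : part33) (x : 'I_9) :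
  #|[set S : pair9 | (x \in val S) && incident (val P) (val S)]| = 2.
Proof.
have [s Ls ->] := part33_labeling P; have bs := labeling_balanced Ls.
rewrite (card_pair9 (fun X => (x \in X) && incident (partition_of s) X)).
apply: etrans (eqP (allP (allP cell_pair_degree s Ls) _ (iota_ord x))).
apply: eq_in_count => ab Pab.
by rewrite /= (mem_pair_set _ Pab) (incident_partition_of bs Pab).
Qed.

Local Open Scope ring_scope.

Definition Nmx := incmx - 4%:R^-1 *: onesmx.

Definition pointmx : 'M[rat]_(#|{: pair9}|, 9) :=
  \matrix_(j, x) (x \in val (@enum_val _ {: pair9} j))%:R.

Lemma NmxE i j :
  Nmx i j = (incident (val (enum_val i)) (val (enum_val j)))%:R - 4%:R^-1.
Proof. by rewrite !mxE mulr1. Qed.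

Lemma adjmx_Nmx : adjmx *m Nmx = - 12%:R *: Nmx.
Proof.
apply/matrixP => i j; rewrite mulmx_enum_rank [RHS]mxE NmxE.
under eq_bigr => Q _ do rewrite mxE NmxE enum_rankK.
rewrite sumr_boolMB card_adj33_incident card_adj33.
by case: incident => /=; lra.
Qed.

Lemma Nmx_pointmx : Nmx *m pointmx = 0.
Proof.
apply/matrixP => i x; rewrite mulmx_enum_rank [RHS]mxE.
under eq_bigr => S _ do rewrite NmxE mxE enum_rankK mulrC.
by rewrite sumr_boolMB card_incident_mem card_pair9_mem; lra.
Qed.

Lemma incmxT_Nmx :
  incmx^T *m Nmx + pointmx *m (10%:R *: (pointmx^T - 8%:R^-1 *: const_mx 1))
  = 70%:R%:M.
Proof.
apply/matrixP => i j; set S := enum_val i; set T := enum_val j.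
have MtN : (incmx^T *m Nmx) i j
    = #|[set P : part33 | incident (val P) (val S) && incident (val P) (val T)]|%:R
      - 70%:R * 4%:R^-1.
  rewrite mulmx_enum_rank; under eq_bigr => P _ do rewrite NmxE !mxE !enum_rankK.
  by rewrite sumr_boolMB card_incident.
have VD : (pointmx *m (10%:R *: (pointmx^T - 8%:R^-1 *: const_mx 1))) i j
    = 10%:R * (#|val S :&: val T|%:R - 2%:R * 8%:R^-1).
  rewrite mxE; under eq_bigr => x _ do rewrite !mxE mulr1 mulrCA.
  have meetE : [set x | (x \in val S) && (x \in val T)] = val S :&: val T.
    by apply/setP => x; rewrite !inE.
  have SE : [set x | x \in val S] = val S by apply/setP => x; rewrite inE.
  by rewrite -mulr_sumr sumr_boolMB -/S -/T meetE SE (eqP (valP S)).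
rewrite mxE MtN VD [RHS]mxE card_incident2 -(inj_eq enum_val_inj) -/S -/T pair9_eqE.
by case: #|_| (pair9_meet_le2 S T) => [|[|[|m]]] // _; rewrite /= ?mulr0n ?mulr1n; lra.
Qed.

Lemma row_full_pointmx : row_full pointmx.
Proof.
pose row_of (X : {set 'I_9}) : 'rV[rat]_9 := \row_w (w \in X)%:R.
have row_of_sub (X : {set 'I_9}) : #|X| == 2 -> (row_of X <= pointmx)%MS.
  move=> X2; apply: (eq_row_sub (enum_rank (Sub X X2 : pair9))).
  by apply/rowP => w; rewrite !mxE enum_rankK.
rewrite -sub1mx; apply/row_subP => x; rewrite row1.
pose y := lift x ord0; pose z := lift x (ord_max : 'I_8).
have xy : x != y := neq_lift x ord0.
have xz : x != z := neq_lift x ord_max.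
have yz : y != z by rewrite (inj_eq lift_inj).
have -> : delta_mx 0 x = 2%:R^-1 *: (row_of [set x; y] + row_of [set x; z])
    + (- 2%:R^-1) *: row_of [set y; z].
  apply/rowP => w; rewrite !mxE !inE /=.
  have disj a b : a != b -> ~~ ((w == a) && (w == b)).
    by apply: contra => /andP[/eqP <- /eqP ->].
  move: (disj _ _ xy) (disj _ _ xz) (disj _ _ yz).
  by case: (w == x); case: (w == y); case: (w == z) => //= _ _ _; lra.
apply: addmx_sub; apply: scalemx_sub; first apply: addmx_sub.
all: by apply: row_of_sub; rewrite cards2 ?xy ?xz ?yz.
Qed.

Theorem mainTheorem3 :
  let N := incmx - 4%:R^-1 *: onesmx in
  (forall j : 'I_#|{: pair9}|, adjmx *m col j N = (- 12%:R) *: col j N)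
  /\ \rank N = 27%N.
Proof.
split=> [j|]; first by rewrite colE mulmxA adjmx_Nmx -scalemxAl.
have unitG : incmx^T *m Nmx + pointmx *m (10%:R *: (pointmx^T - 8%:R^-1 *: const_mx 1))
    \in unitmx by rewrite incmxT_Nmx -scalemx1 unitmxZ ?unitmx1 // unitfE pnatr_eq0.
have := mxrank_complementary Nmx_pointmx unitG.
by rewrite -/Nmx (eqP row_full_pointmx); have := card_pair9T; lia.
Qed.
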